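(* Let $\phi$ be a posterior family for a model $\pi$ with data space $Y$ and parameter space $\Theta$, and let $f$ be a test quantity. Then for every $y\in Y$: $C_{\phi,f}(s\mid y)=C_f(s\mid y)$ for all $s\in\mathbb{R}$ if and only if $q_{\phi,f}(x\mid y)=x$ for all $x\in[0,1]$.
   Context: Model $\pi$: prior density $\pi_{\text{prior}}(\theta)$ on $\Theta$, observation density $\pi_{\text{obs}}(y\mid\theta)$ on $Y$, $\pi_{\text{marg}}(y)=\int_\Theta\pi_{\text{obs}}(y\mid\theta)\pi_{\text{prior}}(\theta)\,\mathrm{d}\theta$, $\pi_{\text{post}}(\theta\mid y)=\pi_{\text{obs}}(y\mid\theta)\pi_{\text{prior}}(\theta)/\pi_{\text{marg}}(y)$. A posterior family is $\phi:\Theta\times Y\to\mathbb{R}^+$ with $\int_\Theta\phi(\theta\mid y)\,\mathrm{d}\theta=1$ for all $y$; a test quantity is a measurable $f:\Theta\times Y\to\mathbb{R}$. Fitted CDF $C_{\phi,f}(s\mid y)=\int_\Theta\mathbb{I}[f(\theta,y)\le s]\phi(\theta\mid y)\,\mathrm{d}\theta$; true CDF $C_f(s\mid y)=\int_\Theta\mathbb{I}[f(\theta,y)\le s]\pi_{\text{post}}(\theta\mid y)\,\mathrm{d}\theta$; fitted tie probability $D_{\phi,f}(s\mid y)=\int_\Theta\mathbb{I}[f(\theta,y)=s]\phi(\theta\mid y)\,\mathrm{d}\theta$. With $U\sim\mathrm{uniform}[0,1]$, $r_{\phi,f}(x\mid\tilde\theta,y)=\Pr\big(C_{\phi,f}(f(\tilde\theta,y)\mid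 y)-U\,D_{\phi,f}(f(\tilde\theta,y)\mid y)\le x\big)$ and $q_{\phi,f}(x\mid y)=\int_\Theta\pi_{\text{post}}(\tilde\theta\mid y)r_{\phi,f}(x\mid\tilde\theta,y)\,\mathrm{d}\tilde\theta$. *)

From HB Require Import structures.
From mathcomp Require Import all_boot all_order all_algebra.
From mathcomp Require Import all_classical all_reals all_analysis.
Set Implicit Arguments. Unset Strict Implicit. Unset Printing Implicit Defensive.
Import Order.TTheory GRing.Theory Num.Theory.
Local Open Scope classical_set_scope.
Local Open Scope ring_scope.

Section Defs.
Context {R : realType} {d1 d2 : measure_display}
  {Th : measurableType d1} {Y : measurableType d2}.
Variable mu : {measure set Th -> \bar R}.

Definition is_model (nu : {measure set Y -> \bar R})
  (prior : Th -> R) (obs : Y -> Th -> R) : Prop :=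
  [/\ (forall th, 0 <= prior th), measurable_fun setT prior
    & (\int[mu]_th (prior th)%:E = 1)%E] /\
  [/\ (forall y th, 0 <= obs y th),
      measurable_fun setT (fun z : Y * Th => obs z.1 z.2)
    & forall th, (\int[nu]_y (obs y th)%:E = 1)%E].

Definition marg (prior : Th -> R) (obs : Y -> Th -> R) (y : Y) : \bar R :=
  \int[mu]_th (obs y th * prior th)%:E.

Definition post (prior : Th -> R) (obs : Y -> Th -> R) (th : Th) (y : Y) : R :=
  obs y th * prior th / fine (marg prior obs y).

Definition posterior_family (phi : Th -> Y -> R) : Prop :=
  [/\ (forall th y, 0 <= phi th y),
      measurable_fun setT (fun z : Th * Y => phi z.1 z.2)
    & forall y, (\int[mu]_th (phi th y)%:E = 1)%E].

Definition test_quantity (f : Th -> Y -> R) : Prop :=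
  measurable_fun setT (fun z : Th * Y => f z.1 z.2).

Definition fitted_cdf (phi f : Th -> Y -> R) (s : R) (y : Y) : \bar R :=
  \int[mu]_th (((f th y <= s)%R : bool)%:R * phi th y)%:E.

Definition true_cdf (prior : Th -> R) (obs : Y -> Th -> R) (f : Th -> Y -> R)
  (s : R) (y : Y) : \bar R :=
  \int[mu]_th (((f th y <= s)%R : bool)%:R * post prior obs th y)%:E.

Definition tie_prob (phi f : Th -> Y -> R) (s : R) (y : Y) : \bar R :=
  \int[mu]_th (((f th y == s) : bool)%:R * phi th y)%:E.

Definition rank_cdf (phi f : Th -> Y -> R) (x : R) (th' : Th) (y : Y) : \bar R :=
  (@lebesgue_measure R)
    [set u : R | (0 <= u <= 1) /\
       fine (fitted_cdf phi f (f th' y) y) - u * fine (tie_prob phi f (f th' y) y) <= x].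

Definition qfun (phi : Th -> Y -> R) (prior : Th -> R) (obs : Y -> Th -> R)
  (f : Th -> Y -> R) (x : R) (y : Y) : \bar R :=
  (\int[mu]_t ((post prior obs t y)%:E * rank_cdf phi f x t y))%E.

End Defs.

(* Fix y, let W be the fitted law phi(. | y), F(s) = W(f <= s) and
   F(s-) = W(f < s).  The rank probability r(x | theta, y) only depends on
   s = f(theta, y), through H_x(s) = Pr(F(s) - U (F(s) - F(s-)) <= x), which is
   nonincreasing in s.  For 0 <= x < 1 with x >= F somewhere, let s0 be the
   x-quantile of F: then H_x(s) = 1[s < s0] + c 1[s = s0] with
   F(s0-) + c (F(s0) - F(s0-)) = x, so q(x) = Post(f < s0) + c Post(f = s0),
   which is x when the posterior law of f has cdf F (the cases x = 1 and
   F > x everywhere, where H_x is constant, are immediate).  Conversely,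
   H_{F(s)} = 1 on {f <= s} gives Post(f <= s) <= q(F(s)) = F(s), and H_x = 0
   on {f > s} for x < F(s) gives x = q(x) <= Post(f <= s). *)

From HB Require Import structures.
From mathcomp Require Import all_boot all_order all_algebra.
From mathcomp Require Import all_classical all_reals all_analysis.
From mathcomp Require Import measurable_realfun ring lra.
Import Order.TTheory GRing.Theory Num.Theory.
Local Open Scope classical_set_scope.
Local Open Scope ring_scope.

Section measurable_bool.
Context {d} {T : measurableType d} {R : realType} {P : T -> bool}.
Hypothesis mP : measurable_fun setT P.

Lemma measurable_set_bool : measurable [set t | P t].
Proof. by rewrite -[X in measurable X]setTI; exact: mP. Qed.

Lemma measurable_natr_bool : measurable_fun setT (fun t => (P t)%:R : R).
Proof.
have -> : (fun t => (P t)%:R : R) = fun t => if P t then 1 else 0.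
  by apply/funext => t; case: (P t).
exact: measurable_fun_ifT mP (measurable_cst _) (measurable_cst _).
Qed.

End measurable_bool.

Section density_measure.
Context {d} {T : measurableType d} {R : realType}.
Variable mu : {measure set T -> \bar R}.
Context {w : T -> R}.

(* [w0] and [mw] are unused: they only make the measure instance below
   possible, as for [induced_charge]. *)
Definition density_measure (w0 : forall t, 0 <= w t) (mw : measurable_fun setT w)
    (A : set T) : \bar R :=
  (\int[mu]_(t in A) (w t)%:E)%E.

Hypotheses (w0 : forall t, 0 <= w t) (mw : measurable_fun setT w).

Let density_measure0 : density_measure w0 mw set0 = 0%E.
Proof. exact: integral_set0. Qed.

Let density_measure_ge0 A : (0 <= density_measure w0 mw A)%E.
Proof. by apply: integral_ge0 => t _; rewrite lee_fin. Qed.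

Let density_measure_sigma_additive : semi_sigma_additive (density_measure w0 mw).
Proof.
apply: semi_sigma_additive_nng_induced => [|t]; first exact/measurable_EFinP.
by rewrite lee_fin.
Qed.

HB.instance Definition _ := isMeasure.Build _ T R (density_measure w0 mw)
  density_measure0 density_measure_ge0 density_measure_sigma_additive.

Lemma integral_indic_density (P : T -> bool) :
  (\int[mu]_t ((P t)%:R * w t)%:E = density_measure w0 mw [set t | P t])%E.
Proof.
rewrite /density_measure [RHS]integral_mkcond; apply: eq_integral => t _ /=.
rewrite /patch; case: ifPn => [/set_mem/= ->|]; first by rewrite mul1r.
by rewrite notin_setE /= => /negP/negbTE ->; rewrite mul0r.
Qed.

End density_measure.

Section level_sets.
Context {d} {T : measurableType d} {R : realType} {g : T -> R}.
Hypothesis mg : measurable_fun setT g.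

Lemma measurable_level_le s : measurable [set t | g t <= s].
Proof. exact/measurable_set_bool/measurable_fun_ler. Qed.

Lemma measurable_level_lt s : measurable [set t | g t < s].
Proof. exact/measurable_set_bool/measurable_fun_ltr. Qed.

Lemma measurable_level_eq s : measurable [set t | g t == s].
Proof. exact/measurable_set_bool/measurable_fun_eqr. Qed.

Variable W : {measure set T -> \bar R}.

Lemma measure_level_le_split s :
  W [set t | g t <= s] = (W [set t | (g t < s)%R] + W [set t | g t == s])%E.
Proof.
have -> : [set t | g t <= s] = [set t | g t < s] `|` [set t | g t == s].
  apply/seteqP; split => t /=; last by case=> [/ltW|/eqP ->].
  by rewrite le_eqVlt => /orP[->|->]; [right|left].
apply: measureU; [exact: measurable_level_lt|exact: measurable_level_eq|].
by apply/seteqP; split => t //= [+ /eqP e]; rewrite e ltxx.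
Qed.

Lemma cvg_measure_level_lt s :
  W [set t | g t <= s - n.+1%:R^-1] @[n --> \oo] --> W [set t | g t < s].
Proof.
have -> : [set t | g t < s] = \bigcup_n [set t | g t <= s - n.+1%:R^-1].
  apply/seteqP; split => t /=.
    by move=> gs; have [k hk] := ltr_add_invr gs; exists k => //=; rewrite lerBrDr ltW.
  by case=> n _ /= /le_lt_trans; apply; rewrite ltrBlDr ltrDl invr_gt0.
apply: nondecreasing_cvg_mu => [n||m n mn]; first exact: measurable_level_le.
- by apply: bigcup_measurable => n _; exact: measurable_level_le.
apply/subsetPset => t /= /le_trans; apply; rewrite lerD2l lerN2.
by rewrite lef_pV2 ?posrE // ler_nat.
Qed.

Lemma cvg_measure_level_le s : (W setT < +oo)%E ->
  W [set t | g t <= s + n.+1%:R^-1] @[n --> \oo] --> W [set t | g t <= s].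
Proof.
move=> W_fin.
have -> : [set t | g t <= s] = \bigcap_n [set t | g t <= s + n.+1%:R^-1].
  apply/seteqP; split => t /=.
    by move=> gs n _ /=; rewrite (le_trans gs) // lerDl invr_ge0.
  move=> h; rewrite leNgt; apply/negP => sg; have [k hk] := ltr_add_invr sg.
  by have := h k I; rewrite /= leNgt hk.
apply: nonincreasing_cvg_mu => [|n||m n mn]; last 2 first.
- by apply: bigcap_measurableType => n _; exact: measurable_level_le.
- apply/subsetPset => t /= /le_trans; apply; rewrite lerD2l.
  by rewrite lef_pV2 ?posrE // ler_nat.
- by rewrite (le_lt_trans _ W_fin) // le_measure ?inE //; exact: measurable_level_le.
- exact: measurable_level_le.
Qed.

Lemma cvg_measure_level_setT : W [set t | g t <= n%:R] @[n --> \oo] --> W setT.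
Proof.
have -> : setT = \bigcup_n [set t | g t <= n%:R].
  apply/seteqP; split => t //= _; exists (Num.truncn `|g t|).+1 => //=.
  exact: le_trans (ler_norm _) (ltW (truncnS_gt _)).
apply: nondecreasing_cvg_mu => [n||m n mn]; first exact: measurable_level_le.
- by apply: bigcup_measurable => n _; exact: measurable_level_le.
by apply/subsetPset => t /= /le_trans; apply; rewrite ler_nat.
Qed.

Lemma cvg_measure_level_0 : (W setT < +oo)%E ->
  W [set t | g t <= - n%:R] @[n --> \oo] --> 0%E.
Proof.
move=> W_fin; rewrite -(measure0 W).
have -> : set0 = \bigcap_n [set t | g t <= - n%:R].
  apply/seteqP; split => t //= /(_ (Num.truncn `|g t|).+1 I) /=.
  rewrite lerNr => /(lt_le_trans (truncnS_gt _)).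
  by rewrite ltNge -normrN ler_norm.
apply: nonincreasing_cvg_mu => [|n||m n mn]; last 2 first.
- by apply: bigcap_measurableType => n _; exact: measurable_level_le.
- by apply/subsetPset => t /= /le_trans; apply; rewrite lerN2 ler_nat.
- by rewrite (le_lt_trans _ W_fin) // le_measure ?inE //; exact: measurable_level_le.
- exact: measurable_level_le.
Qed.

End level_sets.

Section level_set_agreement.
Context {d} {T : measurableType d} {R : realType} {g : T -> R}.
Hypothesis mg : measurable_fun setT g.
Context {P W : {measure set T -> \bar R}}.
Hypothesis PW : forall s, P [set t | g t <= s] = W [set t | g t <= s].

Lemma eq_measure_level_lt s : P [set t | g t < s] = W [set t | g t < s].
Proof.
have := cvg_measure_level_lt mg W s; under eq_fun do rewrite -PW.
exact: cvg_unique (cvg_measure_level_lt mg P s).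
Qed.

Lemma eq_measure_level_setT : P setT = W setT.
Proof.
have := cvg_measure_level_setT mg W; under eq_fun do rewrite -PW.
exact: cvg_unique (cvg_measure_level_setT mg P).
Qed.

Lemma eq_measure_level_eq s : (W setT < +oo)%E ->
  P [set t | g t == s] = W [set t | g t == s].
Proof.
move=> W_fin; have Wlt_fin : W [set t | g t < s] \is a fin_num.
  rewrite ge0_fin_numE // (le_lt_trans _ W_fin) // le_measure ?inE //.
  exact: measurable_level_lt.
have := measure_level_le_split mg P s.
rewrite PW eq_measure_level_lt measure_level_le_split //.
move/(congr1 (fun z => z - W [set t | (g t < s)%R])%E)/esym.
by rewrite /= !(addeC (W [set t | (g t < s)%R])) !addeK.
Qed.

End level_set_agreement.

Section rank_prob.
Context {R : realType}.
Implicit Types x a l : R.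

(* Pr(a - U (a - l) <= x) for U uniform on [0, 1]: the randomized rank of a
   value whose fitted cdf jumps from l to a. *)
Definition rank_prob x a l : R :=
  if a <= x then 1 else if l < x then (x - l) / (a - l) else 0.

Lemma rank_prob_eq1 x a l : a <= x -> rank_prob x a l = 1.
Proof. by rewrite /rank_prob => ->. Qed.

Lemma rank_prob_eq0 x a l : x < a -> x <= l -> rank_prob x a l = 0.
Proof. by rewrite /rank_prob => /lt_geF -> /le_gtF ->. Qed.

Lemma rank_prob_interp x a l : l <= x <= a -> l + rank_prob x a l * (a - l) = x.
Proof.
move=> /andP[lx xa]; rewrite /rank_prob; case: ifPn => [ax|].
  by rewrite mul1r addrC subrK; apply/eqP; rewrite eq_le ax xa.
rewrite -ltNge => xa'; case: ifPn => [lx'|]; last first.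
  by rewrite -leNgt => xl; rewrite mul0r addr0; apply/eqP; rewrite eq_le lx xl.
have al : a - l != 0 by rewrite subr_eq0 gt_eqF // (lt_trans lx').
by rewrite divfK // addrC subrK.
Qed.

Let lebesgue_measure_cc c e :
  lebesgue_measure [set u : R | c <= u <= e] = if c < e then (e - c)%:E else 0%E.
Proof.
rewrite (_ : [set u | c <= u <= e] = [set` `[c, e]]); last first.
  by apply/seteqP; split => u /=; rewrite in_itv.
by rewrite lebesgue_measure_itv /= lte_fin -EFinB; case: ifP.
Qed.

Lemma lebesgue_measure_rank_set x a l : l <= a ->
  lebesgue_measure [set u : R | (0 <= u <= 1) /\ a - u * (a - l) <= x] =
  (rank_prob x a l)%:E.
Proof.
move=> la; rewrite /rank_prob; case: ifPn => [ax|].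
  rewrite (_ : [set u | _ /\ _] = [set u | 0 <= u <= 1]).
    by rewrite lebesgue_measure_cc ltr01 subr0.
  apply/seteqP; split => u /=; first by case.
  move=> /[dup] /andP[u0 u1] ->; split => //.
  by rewrite (le_trans _ ax) // lerBlDr lerDl mulr_ge0 // subr_ge0.
rewrite -ltNge => xa; have [->|al] := eqVneq l a.
  rewrite (lt_gtF xa) (_ : [set u | _ /\ _] = set0) ?measure0 //.
  by apply/seteqP; split => u //= [_]; rewrite subrr mulr0 subr0 leNgt xa.
have al' : 0 < a - l by rewrite subr_gt0 lt_neqAle al la.
rewrite (_ : [set u | _ /\ _] = [set u | (a - x) / (a - l) <= u <= 1]).
  rewrite lebesgue_measure_cc ltr_pdivrMr // mul1r ltrD2l ltrN2.
  case: ifPn => // lx; congr (_%:E); field; exact: lt0r_neq0.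
apply/seteqP; split => u /=.
  move=> [/andP[u0 ->]]; rewrite andbT ler_pdivrMr //; lra.
move=> /andP[+ u1]; rewrite ler_pdivrMr // => h; split; last by lra.
rewrite u1 andbT; nra.
Qed.

Lemma measurable_rank_set x a l :
  measurable [set u : R | (0 <= u <= 1) /\ a - u * (a - l) <= x].
Proof.
apply: measurableI; last first.
  apply: measurable_level_le; apply: measurable_funB => //.
  exact: measurable_funM.
by apply/measurable_set_bool/measurable_and; exact: measurable_fun_ler.
Qed.

Lemma rank_prob_ge0 x a l : l <= a -> 0 <= rank_prob x a l.
Proof. by move=> la; rewrite -lee_fin -lebesgue_measure_rank_set. Qed.

Lemma rank_prob_le1 x a l : l <= a -> rank_prob x a l <= 1.
Proof.
move=> la; rewrite /rank_prob; case: ifPn => [//|]; rewrite -ltNge => xa.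
case: ifPn => [lx|_]; last exact: ler01.
by rewrite ler_pdivrMr ?mul1r ?lerD2r ?ltW // subr_gt0 (lt_trans lx xa).
Qed.

Lemma rank_prob_nonincreasing x a l a' l' : l <= a -> l' <= a' -> a <= a' -> l <= l' ->
  rank_prob x a' l' <= rank_prob x a l.
Proof.
move=> la la' aa' ll'; rewrite -lee_fin -!lebesgue_measure_rank_set //.
apply: le_measure; rewrite ?inE; try exact: measurable_rank_set.
move=> u /= [/[dup] /andP[u0 u1] -> h]; split => //; nra.
Qed.

End rank_prob.

Section distribution_function.
Context {d} {T : measurableType d} {R : realType}.
Variable W : {measure set T -> \bar R}.
Hypothesis W1 : W setT = 1%E.
Variable g : T -> R.
Hypothesis mg : measurable_fun setT g.

Definition cdf_le s := fine (W [set t | g t <= s]).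
Definition cdf_lt s := fine (W [set t | g t < s]).

Let W_fin : (W setT < +oo)%E. Proof. by rewrite W1 ltey. Qed.

Let measure_fin_num A : measurable A -> W A \is a fin_num.
Proof.
by move=> mA; rewrite ge0_fin_numE // (le_lt_trans _ W_fin) // le_measure ?inE.
Qed.

Lemma cdf_leE s : W [set t | g t <= s] = (cdf_le s)%:E.
Proof. by rewrite fineK // measure_fin_num //; exact: measurable_level_le. Qed.

Lemma cdf_ltE s : W [set t | g t < s] = (cdf_lt s)%:E.
Proof. by rewrite fineK // measure_fin_num //; exact: measurable_level_lt. Qed.

Lemma measure_level_eqE s : W [set t | g t == s] = (cdf_le s - cdf_lt s)%:E.
Proof.
have := measure_level_le_split mg W s.
rewrite cdf_leE cdf_ltE -(fineK (measure_fin_num _ (measurable_level_eq mg s))).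
by rewrite -EFinD => -[->]; rewrite addrC addKr.
Qed.

Lemma cdf_le_ge0 s : 0 <= cdf_le s.
Proof. exact/fine_ge0/measure_ge0. Qed.

Lemma cdf_le_le1 s : cdf_le s <= 1.
Proof.
by rewrite -lee_fin -cdf_leE -W1 le_measure ?inE //; exact: measurable_level_le.
Qed.

Lemma cdf_lt_ge0 s : 0 <= cdf_lt s.
Proof. exact/fine_ge0/measure_ge0. Qed.

Lemma cdf_le_nondecreasing : {homo cdf_le : s s' / s <= s'}.
Proof.
move=> s s' ss'; rewrite -lee_fin -!cdf_leE le_measure ?inE //.
- exact: measurable_level_le.
- exact: measurable_level_le.
- by move=> t /= /le_trans; apply.
Qed.

Lemma cdf_lt_le_cdf_le s : cdf_lt s <= cdf_le s.
Proof.
rewrite -lee_fin -cdf_leE -cdf_ltE le_measure ?inE //.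
- exact: measurable_level_lt.
- exact: measurable_level_le.
- by move=> t /= /ltW.
Qed.

Lemma cdf_le_le_cdf_lt s s' : s < s' -> cdf_le s <= cdf_lt s'.
Proof.
move=> ss'; rewrite -lee_fin -cdf_leE -cdf_ltE le_measure ?inE //.
- exact: measurable_level_le.
- exact: measurable_level_lt.
- by move=> t /= /le_lt_trans; apply.
Qed.

Lemma cdf_lt_nondecreasing : {homo cdf_lt : s s' / s <= s'}.
Proof.
move=> s s'; rewrite le_eqVlt => /predU1P[<-//|ss'].
exact: le_trans (cdf_lt_le_cdf_le s) (cdf_le_le_cdf_lt _ _ ss').
Qed.

Lemma exists_cdf_le_gt x : x < 1 -> exists s, x < cdf_le s.
Proof.
move=> x1; have [//|/forallNP Fx] := pselect (exists s, x < cdf_le s).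
have := cvg_measure_level_setT mg W; rewrite W1 => W_cvg.
have : (1 <= x%:E)%E.
  rewrite -(cvg_lim _ W_cvg) //; apply: lime_le; first by apply/cvg_ex; exists 1%E.
  by apply: nearW => n; rewrite cdf_leE lee_fin leNgt; apply/negP; exact: Fx.
by rewrite lee_fin leNgt x1.
Qed.

Lemma exists_cdf_le_lt x : 0 < x -> exists s, cdf_le s < x.
Proof.
move=> x0; have [//|/forallNP Fx] := pselect (exists s, cdf_le s < x).
have W_cvg := cvg_measure_level_0 mg W W_fin.
have : (x%:E <= 0)%E.
  rewrite -(cvg_lim _ W_cvg) //; apply: lime_ge; first by apply/cvg_ex; exists 0%E.
  by apply: nearW => n; rewrite cdf_leE lee_fin leNgt; apply/negP; exact: Fx.
by rewrite lee_fin leNgt x0.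
Qed.

Lemma cdf_lt_le x s0 : (forall s, s < s0 -> cdf_le s <= x) -> cdf_lt s0 <= x.
Proof.
move=> Fx; have W_cvg := cvg_measure_level_lt mg W s0.
rewrite -lee_fin -cdf_ltE -(cvg_lim _ W_cvg) //.
apply: lime_le; first by apply/cvg_ex; eexists; exact: W_cvg.
by apply: nearW => n; rewrite cdf_leE lee_fin Fx // ltrBlDr ltrDl invr_gt0.
Qed.

Lemma cdf_le_ge x s0 : (forall s, s0 < s -> x <= cdf_le s) -> x <= cdf_le s0.
Proof.
move=> Fx; have W_cvg := cvg_measure_level_le mg W s0 W_fin.
rewrite -lee_fin -cdf_leE -(cvg_lim _ W_cvg) //.
apply: lime_ge; first by apply/cvg_ex; eexists; exact: W_cvg.
by apply: nearW => n; rewrite cdf_leE lee_fin Fx // ltrDl invr_gt0.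
Qed.

Lemma cdf_le_quantile x : x < 1 -> (exists s, cdf_le s <= x) ->
  exists s0, (forall s, s < s0 -> cdf_le s <= x) /\ (forall s, s0 < s -> x < cdf_le s).
Proof.
move=> x1 [s1 Fs1]; have [n xFn] := exists_cdf_le_gt _ x1.
pose S := [set s | cdf_le s <= x].
have S_sup : has_sup S.
  split; first by exists s1.
  exists n => s Fs; rewrite leNgt; apply/negP => ns.
  by move: (cdf_le_nondecreasing _ _ (ltW ns)); rewrite leNgt (le_lt_trans Fs xFn).
exists (sup S); split => s.
  move=> /(sup_gt (S_sup.1))[s' Fs' ss'].
  exact: le_trans (cdf_le_nondecreasing _ _ (ltW ss')) Fs'.
by move=> Ss; rewrite ltNge; apply/negP => /(sup_upper_bound S_sup); rewrite leNgt Ss.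
Qed.

Definition rank_at x s := rank_prob x (cdf_le s) (cdf_lt s).

Lemma rank_at_ge0 x s : 0 <= rank_at x s.
Proof. exact/rank_prob_ge0/cdf_lt_le_cdf_le. Qed.

Lemma rank_at_le1 x s : rank_at x s <= 1.
Proof. exact/rank_prob_le1/cdf_lt_le_cdf_le. Qed.

Lemma rank_at_nonincreasing x : {homo rank_at x : s s' / s <= s' >-> s' <= s}.
Proof.
move=> s s' ss'; apply: rank_prob_nonincreasing; try exact: cdf_lt_le_cdf_le.
  exact: cdf_le_nondecreasing.
exact: cdf_lt_nondecreasing.
Qed.

Lemma measurable_rank_at x : measurable_fun setT (rank_at x).
Proof. by apply: nonincreasing_measurable => //; exact: rank_at_nonincreasing. Qed.

Section quantile.
Context {x s0 : R}.
Hypothesis F_le : forall s, s < s0 -> cdf_le s <= x.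
Hypothesis F_gt : forall s, s0 < s -> x < cdf_le s.

Lemma rank_at_quantile s :
  rank_at x s = (s < s0)%R%:R + rank_at x s0 * (s == s0)%:R.
Proof.
case: (ltgtP s s0) => [ss0|s0s|->]; rewrite ?mulr0 ?addr0 ?mulr1 ?add0r //.
  exact/rank_prob_eq1/F_le.
have [s0m ms] := midf_lt s0s; apply: rank_prob_eq0; first exact: F_gt.
exact: ltW (lt_le_trans (F_gt _ s0m) (cdf_le_le_cdf_lt _ _ ms)).
Qed.

Lemma rank_at_quantile_interp :
  cdf_lt s0 + rank_at x s0 * (cdf_le s0 - cdf_lt s0) = x.
Proof.
apply: rank_prob_interp; rewrite cdf_lt_le //=.
by apply: cdf_le_ge => s /F_gt /ltW.
Qed.

End quantile.

Variable mu : {measure set T -> \bar R}.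
Variable p : T -> R.
Hypotheses (p0 : forall t, 0 <= p t) (mp : measurable_fun setT p).
Local Notation P := (density_measure mu p0 mp).

Let measurable_rank_integrand x :
  measurable_fun setT (fun t => ((p t)%:E * (rank_at x (g t))%:E)%E).
Proof.
apply: emeasurable_funM; apply/measurable_EFinP => //.
exact: measurableT_comp (measurable_rank_at x) mg.
Qed.

Lemma integral_level_step s0 c : 0 <= c ->
  (\int[mu]_t ((p t)%:E * ((g t < s0)%R%:R + c * (g t == s0)%:R)%:E) =
   P [set t | (g t < s0)%R] + c%:E * P [set t | g t == s0])%E.
Proof.
move=> c0.
have mlt := measurable_natr_bool (measurable_fun_ltr mg (measurable_cst s0)).
have meq := measurable_natr_bool (measurable_fun_eqr mg (measurable_cst s0)).
rewrite (eq_integral (fun t => (((g t < s0)%R%:R * p t)%:E +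
    c%:E * ((g t == s0)%:R * p t)%:E)%E)); last first.
  by move=> t _; rewrite -!EFinM -EFinD; congr (_%:E); ring.
rewrite ge0_integralD //; last 4 first.
- by move=> t _; rewrite lee_fin mulr_ge0.
- exact/measurable_EFinP/measurable_funM.
- by move=> t _; rewrite mule_ge0 // lee_fin mulr_ge0.
- exact/measurable_funeM/measurable_EFinP/measurable_funM.
rewrite ge0_integralZl_EFin //; last 2 first.
- by move=> t _; rewrite lee_fin mulr_ge0.
- exact/measurable_EFinP/measurable_funM.
by rewrite !integral_indic_density.
Qed.

Lemma integral_rank_at x :
  (forall s, P [set t | g t <= s] = W [set t | g t <= s]) -> 0 <= x <= 1 ->
  (\int[mu]_t ((p t)%:E * (rank_at x (g t))%:E) = x%:E)%E.
Proof.
move=> PW /andP[x0 x1]; have [->|x_neq1] := eqVneq x 1.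
  have rank1 s : rank_at 1 s = 1 by exact/rank_prob_eq1/cdf_le_le1.
  under eq_integral do rewrite rank1 mule1.
  by rewrite -[LHS]/(P setT) (eq_measure_level_setT mg PW) W1.
have x_lt1 : x < 1 by rewrite lt_neqAle x_neq1.
have [Fx|/forallNP Fx] := pselect (exists s, cdf_le s <= x); last first.
  have {x0}x0 : x = 0.
    apply/eqP; rewrite eq_le x0 andbT leNgt; apply/negP.
    by move=> /exists_cdf_le_lt[s /ltW]; exact: Fx.
  have rank0 s : rank_at x s = 0.
    by apply: rank_prob_eq0; [rewrite ltNge; exact/negP/Fx|rewrite x0 cdf_lt_ge0].
  by under eq_integral do rewrite rank0 mule0; rewrite integral0 x0.
have [s0 [F_le F_gt]] := cdf_le_quantile _ x_lt1 Fx.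
under eq_integral do rewrite (rank_at_quantile F_le F_gt).
rewrite integral_level_step ?rank_at_ge0 // (eq_measure_level_lt mg PW).
rewrite (eq_measure_level_eq mg PW _ W_fin) cdf_ltE measure_level_eqE.
by rewrite -EFinM -EFinD rank_at_quantile_interp.
Qed.

Lemma cdf_eq_of_integral_rank_at :
  (forall x, 0 <= x <= 1 -> (\int[mu]_t ((p t)%:E * (rank_at x (g t))%:E) = x%:E)%E) ->
  forall s, P [set t | g t <= s] = W [set t | g t <= s].
Proof.
move=> q_id s; rewrite cdf_leE.
have m_le : measurable_fun setT (fun t => ((g t <= s)%R%:R * p t)%:E).
  exact/measurable_EFinP/measurable_funM/mp/measurable_natr_bool/measurable_fun_ler.
have P_le : (P [set t | (g t <= s)%R] <= (cdf_le s)%:E)%E.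
  rewrite -[leRHS](q_id (cdf_le s)) ?cdf_le_ge0 ?cdf_le_le1 //.
  rewrite -integral_indic_density; apply: ge0_le_integral => //.
  - by move=> t _; rewrite lee_fin mulr_ge0.
  move=> t _; rewrite -EFinM lee_fin; have [gts|sgt] := leP (g t) s.
    by rewrite mul1r [rank_at _ _]rank_prob_eq1 ?mulr1 // cdf_le_nondecreasing.
  by rewrite mul0r mulr_ge0 ?rank_at_ge0.
have le_P x : x < cdf_le s -> (x%:E <= P [set t | (g t <= s)%R])%E.
  move=> xF; have [x_lt0|x_ge0] := ltP x 0.
    by rewrite (le_trans _ (measure_ge0 _ _)) // lee_fin ltW.
  rewrite -(q_id x); last by rewrite x_ge0 (le_trans (ltW xF)) ?cdf_le_le1.
  rewrite -integral_indic_density; apply: ge0_le_integral => //.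
  - by move=> t _; rewrite -EFinM lee_fin mulr_ge0 ?rank_at_ge0.
  move=> t _; rewrite -EFinM lee_fin; have [gts|sgt] := leP (g t) s.
    by rewrite mul1r ler_piMr // rank_at_le1.
  rewrite mul0r [rank_at _ _]rank_prob_eq0 ?mulr0 //.
    exact: lt_le_trans xF (cdf_le_nondecreasing _ _ (ltW sgt)).
  exact: ltW (lt_le_trans xF (cdf_le_le_cdf_lt _ _ sgt)).
apply/eqP; rewrite eq_le P_le /=; apply/lee_subgt0Pr => e e0.
by rewrite -EFinB le_P // ltrBlDr ltrDl.
Qed.

End distribution_function.

Section posterior.
Context {R : realType} {d1 d2} {Th : measurableType d1} {Y : measurableType d2}.
Variable mu : {measure set Th -> \bar R}.
Context {prior : Th -> R} {obs : Y -> Th -> R}.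

Lemma post_ge0 : (forall th, 0 <= prior th) -> (forall y th, 0 <= obs y th) ->
  forall th y, 0 <= post mu prior obs th y.
Proof.
move=> prior0 obs0 th y; rewrite divr_ge0 ?mulr_ge0 // fine_ge0 //.
by apply: integral_ge0 => t _; rewrite lee_fin mulr_ge0.
Qed.

Lemma measurable_post : measurable_fun setT prior ->
  measurable_fun setT (fun z : Y * Th => obs z.1 z.2) ->
  forall y, measurable_fun setT (post mu prior obs ^~ y).
Proof.
move=> mprior mobs y; apply: measurable_funM => //; apply: measurable_funM => //.
exact: (measurable_fun_pair2 (f := fun z : Y * Th => obs z.1 z.2)).
Qed.

End posterior.

Section posterior_family.
Context {R : realType} {d1 d2} {Th : measurableType d1} {Y : measurableType d2}.
Variable mu : {measure set Th -> \bar R}.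
Variables (phi f : Th -> Y -> R) (y : Y).
Hypotheses (phi0 : forall th, 0 <= phi th y) (mphi : measurable_fun setT (phi ^~ y)).
Local Notation W := (density_measure mu phi0 mphi).

Lemma fitted_cdfE s : fitted_cdf mu phi f s y = W [set t | f t y <= s].
Proof. exact: integral_indic_density. Qed.

Lemma tie_probE s : tie_prob mu phi f s y = W [set t | f t y == s].
Proof. exact: integral_indic_density. Qed.

Hypotheses (W1 : W setT = 1%E) (mf : measurable_fun setT (f ^~ y)).

Lemma rank_cdfE x t : rank_cdf mu phi f x t y = (rank_at W (f ^~ y) x (f t y))%:E.
Proof.
rewrite /rank_cdf fitted_cdfE tie_probE (measure_level_eqE _ W1 _ mf) /=.
exact/lebesgue_measure_rank_set/cdf_lt_le_cdf_le.
Qed.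

End posterior_family.

Theorem theorem5 (R : realType) (d1 d2 : measure_display)
  (Th : measurableType d1) (Y : measurableType d2)
  (mu : {sigma_finite_measure set Th -> \bar R})
  (nu : {measure set Y -> \bar R})
  (prior : Th -> R) (obs : Y -> Th -> R) (phi : Th -> Y -> R) (f : Th -> Y -> R) :
  is_model mu nu prior obs ->
  posterior_family mu phi ->
  test_quantity f ->
  forall y : Y,
    (forall s : R, fitted_cdf mu phi f s y = true_cdf mu prior obs f s y) <->
    (forall x : R, 0 <= x <= 1 -> qfun mu phi prior obs f x y = x%:E).
Proof.
move=> [[prior0 mprior _] [obs0 mobs _]] [phi0 mphi phi1] mf y.
have mfy : measurable_fun setT (f ^~ y) :=
  measurable_fun_pair1 (f := fun z : Th * Y => f z.1 z.2) y mf.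
have mphiy : measurable_fun setT (phi ^~ y) :=
  measurable_fun_pair1 (f := fun z : Th * Y => phi z.1 z.2) y mphi.
have post0 := post_ge0 mu prior0 obs0 ^~ y.
have mpost := measurable_post mu mprior mobs y.
pose W := density_measure mu (phi0 ^~ y) mphiy.
have W1 : W setT = 1%E := phi1 y.
have true_cdfE s : true_cdf mu prior obs f s y =
    density_measure mu post0 mpost [set t | f t y <= s].
  exact: integral_indic_density.
have qfunE x : qfun mu phi prior obs f x y =
    (\int[mu]_t ((post mu prior obs t y)%:E * (rank_at W (f ^~ y) x (f t y))%:E))%E.
  by apply: eq_integral => t _; rewrite rank_cdfE.
split => [cdf_eq x x01|q_id s].
  rewrite qfunE integral_rank_at // => s.
  by rewrite -true_cdfE -cdf_eq; exact: fitted_cdfE.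
rewrite fitted_cdfE true_cdfE; apply/esym.
apply: cdf_eq_of_integral_rank_at => // x x01.
by rewrite -qfunE q_id.
Qed.
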